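(* Let $H$ be a clutter, $T$ a minimal transversal of $H$, $S\subseteq V(H)$ and $x\in V(H)$. Then either (i) there exists a minimal transversal $T'\subseteq T\setminus\{x\}$ of $H\backslash x$ such that $T'\cap S=(T\setminus\{x\})\cap S$; or (ii) there exist a vertex $z\in S\setminus\{x\}$ and an edge $h\in E(H)$ such that $x\in h$, $h\cap T=\{z\}$, and $T\setminus\{z\}\in b(H\circ(h,x,z))$.
   Context: A hypergraph has a finite vertex set and a set of subsets (edges). A clutter is a hypergraph in which no edge is a proper subset of another; $cl(\cdot)$ keeps only the inclusion-wise minimal edges. A transversal of $H$ is a vertex set meeting every edge; $b(H)$ is the clutter of inclusion-wise minimal transversals. For $v\in V(H)$: $H\backslash v=(V(H)\setminus\{v\},\{h\in E(H):v\notin h\})$ and $H/v=cl(V(H)\setminus\{v\},\{h\setminus\{v\}:h\in E(H)\})$. For disjoint $D,C\subseteq V(H)$, $H[D;C]$ is the clutter obtained by deleting all vertices of $D$ and contracting all vertices of $C$ (the order does not matter). The join of clutters is $H\vee F=cl(V(H)\cup V(F),E(H)\cup E(F))$. For an edge $h\in E(H)$ and distinct $u,v\in h$, $H\circ(h,u,v)=H[\{u\};h\setminus\{u\}]\vee H[\{v\};h\setminus\{v\}]$. *)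

From mathcomp Require Import all_boot.
Set Implicit Arguments. Unset Strict Implicit. Unset Printing Implicit Defensive.

Record hgraph (T : finType) := Hg { hV : {set T}; hE : {set {set T}} }.

Section Hyper.
Variable T : finType.
Implicit Types (H F : hgraph T) (X Y A D C h : {set T}) (v u : T).

Definition is_hypergraph H : Prop := forall h, h \in hE H -> h \subset hV H.

Definition is_clutter H : Prop :=
  is_hypergraph H /\
  forall h h', h \in hE H -> h' \in hE H -> ~ (h \proper h').

Definition cl H : hgraph T :=
  Hg (hV H) [set h in hE H | [forall h', (h' \in hE H) ==> ~~ (h' \proper h)]].

Definition transversal H X : bool :=
  (X \subset hV H) && [forall h in hE H, h :&: X != set0].

Definition min_transversal H X : bool :=
  transversal H X && [forall Y : {set T}, (Y \proper X) ==> ~~ transversal H Y].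

Definition blocker H : hgraph T :=
  Hg (hV H) [set X | min_transversal H X].

Definition hdel H v : hgraph T :=
  Hg (hV H :\ v) [set h in hE H | v \notin h].
Definition hcon H v : hgraph T :=
  cl (Hg (hV H :\ v) [set h :\ v | h in hE H]).

Definition minor H D C : hgraph T :=
  foldl hcon (foldl hdel H (enum D)) (enum C).

Definition hjoin H F : hgraph T := cl (Hg (hV H :|: hV F) (hE H :|: hE F)).

Definition hcirc H h u v : hgraph T :=
  hjoin (minor H [set u] (h :\ u)) (minor H [set v] (h :\ v)).

End Hyper.

From Pilot Require Import Defs.
From mathcomp Require Import all_boot.

Set Implicit Arguments. Unset Strict Implicit. Unset Printing Implicit Defensive.

(* Every vertex t of a minimal transversal T has a private edge e, that is,
   e :&: T = [set t].  If each z in (T :\ x) :&: S has a private edge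
   avoiding x, then every minimal transversal of H \ x inside T :\ x
   contains these z, which gives (i).  Otherwise some z in (T :\ x) :&: S
   has only private edges through x; let h be one.  Up to minimal edges,
   H o (h, x, z) has the edges e :\: (h :\ x) with x \notin e and
   e :\: (h :\ z) with z \notin e.  The set T :\ z misses h, meets all
   these edges (those of the first kind because no edge avoiding x meets T
   exactly in z), and each of its vertices t keeps the private edge
   e_t :\: (h :\ z), so it is a minimal transversal, which is (ii). *)

Section Transversals.
Variable V : finType.
Implicit Types (G : hgraph V) (W X Y A e f : {set V}) (P Q : {set {set V}}).

Lemma setID1_eq0 A X t :
  (A :&: (X :\ t) == set0) = (A :&: X == [set t]) || (A :&: X == set0).
Proof. by rewrite setIDA setD_eq0 subset1. Qed.

Lemma min_transversalP G X :
  reflect (Defs.transversal G X /\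
           {in X, forall t, exists2 e, e \in hE G & e :&: X = [set t]})
          (min_transversal G X).
Proof.
apply: (iffP andP) => -[trX minX]; split=> //.
  move=> t tX; have /andP [XV /forall_inP hitX] := trX.
  have := forallP minX (X :\ t); rewrite properD1 //= /Defs.transversal.
  rewrite (subset_trans (subsetDl _ _) XV) negb_forall_in.
  case/exists_inP => e eE.
  rewrite negbK setID1_eq0 => /orP [/eqP eX | eX0]; first by exists e.
  by have := hitX e eE; rewrite eX0.
apply/forallP => Y; apply/implyP => /properP [YX [t tX tY]].
have [e eE eX] := minX t tX.
apply/negP => /andP [_ /forall_inP /(_ e eE) /set0Pn [y /setIP [ye yY]]].
have /set1P yt : y \in [set t] by rewrite -eX inE ye (subsetP YX).
by rewrite -yt yY in tY.
Qed.

Lemma private_mem G X Y e t :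
  Y \subset X -> Defs.transversal G Y -> e \in hE G -> e :&: X = [set t] ->
  t \in Y.
Proof.
move=> YX /andP [_ /forall_inP hitY] eE eX.
have /set0Pn [y /setIP [ye yY]] := hitY e eE.
have /set1P <- // : y \in [set t] by rewrite -eX inE ye (subsetP YX).
Qed.

Lemma min_transversal_exists G X :
  Defs.transversal G X ->
  exists2 Y : {set V}, Y \subset X & min_transversal G Y.
Proof.
move=> trX; have [Y /minsetP [trY minY] YX] := minset_exists trX.
exists Y => //; apply/andP; split => //; apply/forallP => Z; apply/implyP.
rewrite properEneq => /andP [ZY sZY].
by apply: contra ZY => trZ; apply/eqP/minY.
Qed.

Lemma transversal_hdel G X x :
  Defs.transversal G X -> Defs.transversal (hdel G x) (X :\ x).
Proof.
move=> /andP [XV /forall_inP hitX]; apply/andP; split; first exact: setSD.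
apply/forall_inP => e; rewrite inE => /andP [eE xe].
rewrite setID1_eq0 negb_or hitX // andbT; apply: contraNneq xe => eX.
by have /setIP [] : x \in e :&: X by rewrite eX set11.
Qed.

Definition hits P X := [forall e in P, e :&: X != set0].

Definition refines P Q := forall e, e \in P -> exists2 f, f \in Q & f \subset e.

(* Mutual refinement means that [hE G] and [P] have the same inclusion-minimal
   members; hence [G] has exactly the transversals of [(W, P)]. *)
Definition hequiv G W P := [/\ hV G = W, refines (hE G) P & refines P (hE G)].

Lemma refines_refl P : refines P P.
Proof. by move=> e eP; exists e. Qed.

Lemma refines_trans P Q R : refines P Q -> refines Q R -> refines P R.
Proof.
move=> PQ QR e /PQ [f /QR [g gR gf] fe].
by exists g => //; apply: subset_trans gf fe.
Qed.

Lemma refines_subset P Q : P \subset Q -> refines P Q.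
Proof. by move=> PQ e eP; exists e; rewrite ?(subsetP PQ). Qed.

Lemma refines_setU P1 P2 Q1 Q2 :
  refines P1 Q1 -> refines P2 Q2 -> refines (P1 :|: P2) (Q1 :|: Q2).
Proof.
move=> PQ1 PQ2 e /setUP [/PQ1 | /PQ2] [f fQ fe].
  by exists f; rewrite // inE fQ.
by exists f; rewrite // inE fQ orbT.
Qed.

Lemma refines_imset (g : {set V} -> {set V}) P Q :
  {homo g : e f / e \subset f} -> refines P Q -> refines (g @: P) (g @: Q).
Proof.
move=> gS PQ _ /imsetP [e /PQ [f fQ fe] ->].
by exists (g f); [apply: imset_f | apply: gS].
Qed.

Lemma refines_filter (p : pred {set V}) P Q :
  (forall e f, f \subset e -> p e -> p f) ->
  refines P Q -> refines [set e in P | p e] [set f in Q | p f].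
Proof.
move=> pS PQ e; rewrite inE => /andP [/PQ [f fQ fe] pe].
by exists f; rewrite // inE fQ (pS e).
Qed.

Lemma refines_cl G : refines (hE G) (hE (cl G)).
Proof.
move=> e eE.
have [f /minsetP [fE fmin] fe] := minset_exists (P := [pred f | f \in hE G]) eE.
exists f => //; rewrite inE [f \in _]fE; apply/forall_inP => g gE.
by rewrite properEneq; apply/negP => /andP [/eqP gf /(fmin g gE)].
Qed.

Lemma hits_refines P Q X : refines P Q -> hits Q X -> hits P X.
Proof.
move=> PQ /forall_inP hitQ; apply/forall_inP => e /PQ [f /hitQ fX fe].
by apply: contraNneq fX => eX0; rewrite -subset0 -eX0 setSI.
Qed.

Lemma refines_private P Q X e t :
  refines P Q -> hits Q X -> e \in P -> e :&: X = [set t] ->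
  exists2 f, f \in Q & f :&: X = [set t].
Proof.
move=> PQ /forall_inP hitQ /PQ [f fQ fe] eX; exists f => //; apply/eqP.
have : f :&: X \subset [set t] by rewrite -eX setSI.
by rewrite subset1 (negbTE (hitQ f fQ)) orbF.
Qed.

Lemma transversal_hequiv G W P X :
  hequiv G W P -> Defs.transversal G X = (X \subset W) && hits P X.
Proof.
by case=> <- GP PG; congr (_ && _); apply/idP/idP; apply: hits_refines.
Qed.

Lemma hequiv_refl G : hequiv G (hV G) (hE G).
Proof. by split => //; apply: refines_refl. Qed.

Lemma hequiv_cl G W P : hequiv G W P -> hequiv (cl G) W P.
Proof.
case=> <- GP PG; split => //; last exact: refines_trans PG (@refines_cl G).
apply: refines_trans GP; apply/refines_subset/subsetP => e.
by rewrite inE => /andP [].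
Qed.

Lemma hequiv_hdel G W P v :
  hequiv G W P -> hequiv (hdel G v) (W :\ v) [set e in P | v \notin e].
Proof.
have avoid e f : f \subset e -> v \notin e -> v \notin f.
  by move=> fe; apply: contra (subsetP fe v).
case=> <- GP PG.
by split => //=; apply: (refines_filter (p := fun e => v \notin e)).
Qed.

Lemma hequiv_hcon G W P v :
  hequiv G W P -> hequiv (hcon G v) (W :\ v) [set e :\ v | e in P].
Proof.
have shrink e f : e \subset f -> e :\ v \subset f :\ v by apply: setSD.
case=> <- GP PG; apply: hequiv_cl; split => //=; exact: refines_imset.
Qed.

Lemma hequiv_foldl_hdel s G W P : hequiv G W P ->
  hequiv (foldl (@hdel V) G s) (W :\: [set:: s])
         [set e in P | [disjoint s & e]].
Proof.
elim: s G W P => [|v s IHs] G W P GWP /=.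
  rewrite setD0; suff -> : [set e in P | [disjoint [::] & e]] = P by [].
  by apply/setP => e; rewrite inE disjoint_has andbT.
rewrite set_cons -setDDl.
suff <- : [set e in [set e in P | v \notin e] | [disjoint s & e]] =
          [set e in P | [disjoint v :: s & e]] by apply/IHs/hequiv_hdel.
by apply/setP => e; rewrite !inE disjoint_cons andbA.
Qed.

Lemma hequiv_foldl_hcon s G W P : hequiv G W P ->
  hequiv (foldl (@hcon V) G s) (W :\: [set:: s]) [set e :\: [set:: s] | e in P].
Proof.
elim: s G W P => [|v s IHs] G W P GWP /=.
  by rewrite setD0 (eq_imset _ (@setD0 V)) imset_id.
rewrite set_cons -setDDl.
suff <- : [set e :\: [set:: s] | e in [set e :\ v | e in P]] =
          [set e :\: (v |: [set:: s]) | e in P] by apply/IHs/hequiv_hcon.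
by rewrite -imset_comp; apply: eq_imset => e; rewrite /= setDDl.
Qed.

Lemma hequiv_minor G D C : hequiv (minor G D C) (hV G :\: D :\: C)
  [set e :\: C | e in [set e in hE G | [disjoint D & e]]].
Proof.
have := hequiv_foldl_hcon (enum C) (hequiv_foldl_hdel (enum D) (hequiv_refl G)).
rewrite !set_enum; suff -> : [set e in hE G | [disjoint enum D & e]] =
                             [set e in hE G | [disjoint D & e]] by [].
by apply/setP => e; rewrite !inE (eq_disjoint (mem_enum D)).
Qed.

Lemma hequiv_hjoin G1 G2 W1 W2 P1 P2 :
  hequiv G1 W1 P1 -> hequiv G2 W2 P2 ->
  hequiv (hjoin G1 G2) (W1 :|: W2) (P1 :|: P2).
Proof.
case=> <- GP1 PG1 [<- GP2 PG2].
by apply: hequiv_cl; split => //=; apply: refines_setU.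
Qed.

Lemma hequiv_hcirc G h u v : hequiv (hcirc G h u v)
  (hV G :\ u :\: (h :\ u) :|: hV G :\ v :\: (h :\ v))
  ([set e :\: (h :\ u) | e in [set e in hE G | u \notin e]] :|:
   [set e :\: (h :\ v) | e in [set e in hE G | v \notin e]]).
Proof.
have avoid w :
    [set e in hE G | [disjoint [set w] & e]] = [set e in hE G | w \notin e].
  by apply/setP => e; rewrite !inE disjoints1.
have := hequiv_hjoin (hequiv_minor G [set u] (h :\ u))
                     (hequiv_minor G [set v] (h :\ v)).
by rewrite !avoid.
Qed.

Section Circ.
Variables (G : hgraph V) (X h : {set V}) (x z : V).
Hypotheses (xh : x \in h) (hX : h :&: X = [set z]).

Lemma notin_circ_edge y : y \in X :\ z -> y \notin h.
Proof.
case/setD1P => yz yX; apply: contra yz => yh.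
by have /set1P -> : y \in [set z] by rewrite -hX inE yh.
Qed.

Lemma setI_circ_edge e A :
  A \subset h -> (e :\: A) :&: (X :\ z) = e :&: (X :\ z).
Proof.
move=> Ah; apply/setP => y; rewrite inE [y \in e :&: _]inE.
have [/notin_circ_edge yh | _] := boolP (y \in X :\ z); last by rewrite !andbF.
by rewrite inE (contra (subsetP Ah y) yh).
Qed.

Lemma transversal_hcirc :
  Defs.transversal G X -> {in hE (hdel G x), forall e, e :&: X != [set z]} ->
  Defs.transversal (hcirc G h x z) (X :\ z).
Proof.
move=> /andP [XV /forall_inP hitX] noprivx.
have hit_off e : e \in hE G -> e :&: X != [set z] -> e :&: (X :\ z) != set0.
  by move=> eE ez; rewrite setID1_eq0 negb_or ez hitX.
rewrite (transversal_hequiv _ (hequiv_hcirc G h x z)); apply/andP; split.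
  apply/subsetP => y yXz; have yh := notin_circ_edge yXz.
  have yx : y != x by apply: contraNneq yh => ->.
  have /setD1P [_ yX] := yXz.
  by rewrite !inE (negbTE yh) !andbF yx (subsetP XV).
apply/forall_inP => f /setUP [] /imsetP [e]; rewrite inE => /andP [eE we] ->.
  by rewrite setI_circ_edge ?subsetDl // hit_off // noprivx // inE eE.
rewrite setI_circ_edge ?subsetDl // hit_off //; apply: contraNneq we => eX.
by have /setIP [] : z \in e :&: X by rewrite eX set11.
Qed.

Lemma min_transversal_hcirc :
  min_transversal G X -> {in hE (hdel G x), forall e, e :&: X != [set z]} ->
  min_transversal (hcirc G h x z) (X :\ z).
Proof.
case/min_transversalP => trX privX noprivx.
have /andP [_ hitXz] := transversal_hcirc trX noprivx.
have [_ _ PcircE] := hequiv_hcirc G h x z.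
have zX : z \in X by have /setIP [] : z \in h :&: X by rewrite hX set11.
apply/min_transversalP; split; first exact: transversal_hcirc.
move=> t /setD1P [tz tX]; have [e eE eX] := privX t tX.
have ze : z \notin e.
  apply: contra tz => ze.
  by have /set1P -> : z \in [set t] by rewrite -eX inE ze zX.
apply: (refines_private PcircE hitXz (e := e :\: (h :\ z))).
  by apply/setUP; right; apply/imsetP; exists e; rewrite // inE eE.
rewrite setI_circ_edge ?subsetDl // setIDA eX.
by apply/setDidPl; rewrite disjoints1 inE.
Qed.

End Circ.

End Transversals.

Theorem mainTheorem14 (V : finType) (H : hgraph V) (T S : {set V}) (x : V) :
  is_clutter H ->
  T \in hE (blocker H) ->
  S \subset hV H ->
  x \in hV H ->
  (exists T' : {set V},
      [/\ T' \subset T :\ x, T' \in hE (blocker (hdel H x))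
        & T' :&: S = (T :\ x) :&: S])
  \/
  (exists (z : V) (h : {set V}),
      [/\ z \in S :\ x, h \in hE H, x \in h, h :&: T = [set z]
        & T :\ z \in hE (blocker (hcirc H h x z))]).
Proof.
move=> _; rewrite inE => minT _ _; have /min_transversalP [trT privT] := minT.
case: (pickP [pred z in (T :\ x) :&: S |
                [forall e in hE (hdel H x), e :&: T != [set z]]]) => /=.
  move=> z /andP [/setIP [/setD1P [zx zT] zS] /forall_inP noprivz].
  have [h hH hT] := privT z zT.
  have xh : x \in h.
    apply: contraT => xh; have := noprivz h.
    by rewrite inE hH xh hT eqxx => /(_ isT).
  right; exists z, h; split => //; first by rewrite !inE zx zS.
  by rewrite inE min_transversal_hcirc.
move=> privS; left.
have [T' T'Tx minT'] := min_transversal_exists (transversal_hdel x trT).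
exists T'; split; rewrite ?inE //.
apply/eqP; rewrite eqEsubset setSI //=; apply/subsetP => z zTxS.
have [/setD1P [_ zT] zS] := setIP zTxS.
have /negbT := privS z; rewrite /= zTxS negb_forall_in.
case/exists_inP => e eE /negPn /eqP eT.
have /min_transversalP [trT' _] := minT'.
have T'T : T' \subset T := subset_trans T'Tx (subsetDl _ _).
by rewrite inE zS (private_mem T'T trT' eE eT).
Qed.
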